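(* Let $R$ be a left arithmetical ring, and let $R'$ be any ring that is Morita equivalent to $R$. Then $R'$ is a left arithmetical ring.
   Context: A ring $R$ is called left arithmetical if: (a) every simple left $R$-module has finitely many elements; (b) every simple left $R$-module is finitely presented; (c) for every positive integer $n$, there are only finitely many isomorphism classes of simple left $R$-modules with exactly $n$ elements. *)

From HB Require Import structures.
From mathcomp Require Import all_boot all_order all_algebra.
Set Implicit Arguments. Unset Strict Implicit. Unset Printing Implicit Defensive.
Import GRing.Theory.
Local Open Scope ring_scope.

(* Left R-modules are MathComp's [lmodType R]; R-linear maps are
   [{linear M -> N}] (scaling on the left). Rings are unital, possibly zero. *)

Section ModuleNotions.
Variable R : pzRingType.

Definition submodule (M : lmodType R) (S : M -> Prop) : Prop :=
  S 0 /\ (forall x y, S x -> S y -> S (x + y)) /\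
  (forall (a : R) x, S x -> S (a *: x)).

Definition simple_module (M : lmodType R) : Prop :=
  (exists x : M, x <> 0) /\
  forall S : M -> Prop, submodule S ->
    (forall x, S x -> x = 0) \/ (forall x, S x).

Definition has_card (M : lmodType R) (n : nat) : Prop :=
  exists s : seq M, uniq s /\ size s = n /\ forall x : M, x \in s.

Definition finite_module (M : lmodType R) : Prop :=
  exists s : seq M, forall x : M, x \in s.

(* Finitely presented: an exact sequence R^m -> R^n -> M -> 0
   (free modules of finite rank realised as row vectors 'rV[R]_n). *)
Definition finitely_presented (M : lmodType R) : Prop :=
  exists (n m : nat) (f : {linear 'rV[R]_n -> M}) (g : {linear 'rV[R]_m -> 'rV[R]_n}),
    (forall y : M, exists x, f x = y) /\
    (forall x, f x = 0 <-> exists z, x = g z).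

Definition mod_iso (M N : lmodType R) : Prop :=
  exists f : {linear M -> N}, bijective f.

Definition left_arithmetical : Prop :=
  (forall M : lmodType R, simple_module M -> finite_module M) /\
  (forall M : lmodType R, simple_module M -> finitely_presented M) /\
  (forall n : nat, (0 < n)%N ->
     exists (k : nat) (Ms : nat -> lmodType R),
       forall M : lmodType R, simple_module M -> has_card M n ->
         exists i, (i < k)%N /\ mod_iso M (Ms i)).

End ModuleNotions.

(* Functors between categories of left modules (objects: lmodType, morphisms:
   linear maps, compared extensionally). *)
Record mod_functor (R S : pzRingType) := ModFunctor {
  fobj : lmodType R -> lmodType S;
  fmap : forall M N : lmodType R, {linear M -> N} -> {linear fobj M -> fobj N};
  fmap_id : forall (M : lmodType R) (f : {linear M -> M}),
      f =1 id -> fmap f =1 id;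
  fmap_comp : forall (M N P : lmodType R) (f : {linear M -> N})
      (g : {linear N -> P}) (h : {linear M -> P}),
      h =1 g \o f -> fmap h =1 fmap g \o fmap f
}.

Definition nat_iso_id (R S : pzRingType) (F : mod_functor R S) (G : mod_functor S R) : Prop :=
  exists eta : forall M : lmodType R, {linear M -> fobj G (fobj F M)},
    (forall M, bijective (eta M)) /\
    (forall (M N : lmodType R) (f : {linear M -> N}),
        fmap G (fmap F f) \o eta M =1 eta N \o f).

Definition morita_equivalent (R S : pzRingType) : Prop :=
  exists (F : mod_functor R S) (G : mod_functor S R),
    nat_iso_id F G /\ nat_iso_id G F.

From HB Require Import structures.
From mathcomp Require Import all_boot all_order all_algebra.
From mathcomp Require Import boolp.
Set Implicit Arguments. Unset Strict Implicit. Unset Printing Implicit Defensive.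
Import GRing.Theory.
Local Open Scope ring_scope.

(* Morita equivalent rings have equivalent categories of left modules, and an
   equivalence [F] (with quasi-inverse [G]) preserves everything that can be
   phrased in terms of maps: zero maps, epimorphisms, simple objects, finitely
   generated (i.e. compact) objects, projective objects and cokernels, hence
   finitely presented modules.  So a simple [R']-module [N] is finitely
   presented because the simple [R]-module [G N] is.  For cardinalities, if
   [F R] is generated by [k] elements then [x |-> fmap F (r |-> r x)] embeds
   [M] into the maps from these generators to [F M], so [|M| <= |F M|^k].  By
   the bound for [G], [N] is finite; by the bound for [F], [G N] has at most
   [|N|^k] elements, and there are finitely many simple [R]-modules of such
   sizes up to isomorphism, whose images under [F] then classify [N]. *)

Definition linear_map (R : pzRingType) (U V : lmodType R) (f : U -> V)
    (f_linear : linear f) : {linear U -> V} :=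
  HB.pack f (GRing.isLinear.Build R U V *:%R f f_linear).

Lemma bij_linear_inv (R : pzRingType) (U V : lmodType R) (f : {linear U -> V}) :
  bijective f -> exists g : {linear V -> U}, cancel f g /\ cancel g f.
Proof.
case=> g fK gK.
have g_linear : linear g by move=> a x y; apply: (can_inj fK); rewrite linearP !gK.
by exists (linear_map g_linear).
Qed.

Section FreeModules.
Variable R : pzRingType.
Implicit Types M N : lmodType R.

Definition comb M n (w : 'I_n -> M) (v : 'rV[R]_n) : M := \sum_j v 0 j *: w j.

Lemma comb_is_linear M n (w : 'I_n -> M) : linear (comb w).
Proof.
move=> a u v; rewrite /comb scaler_sumr -big_split; apply: eq_bigr => j _.
by rewrite !mxE scalerDl scalerA.
Qed.

HB.instance Definition _ M n (w : 'I_n -> M) :=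
  GRing.isLinear.Build R 'rV[R]_n M _ (comb w) (comb_is_linear w).

Lemma comb_delta M n (w : 'I_n -> M) j : comb w (delta_mx 0 j) = w j.
Proof.
rewrite /comb (bigD1 j) //= mxE !eqxx scale1r big1 ?addr0 // => i ij.
by rewrite mxE eqxx (negbTE ij) scale0r.
Qed.

Lemma linear_rowE M n (p : {linear 'rV[R]_n -> M}) v :
  p v = comb (fun j => p (delta_mx 0 j)) v.
Proof.
rewrite [in LHS](row_sum_delta v) linear_sum; apply: eq_bigr => j _.
by rewrite linearZ.
Qed.

Lemma surj_linear_eq M N n (p : {linear 'rV[R]_n -> M}) (u v : {linear M -> N}) :
  (forall y, exists w, p w = y) ->
  (forall j, u (p (delta_mx 0 j)) = v (p (delta_mx 0 j))) -> u =1 v.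
Proof.
move=> p_surj uv y; have [w <-] := p_surj y.
have := linear_rowE (u \o p) w; have := linear_rowE (v \o p) w; rewrite /= => -> ->.
by congr comb; apply/funext => j.
Qed.

Definition scale_map M (x : M) (v : 'rV[R]_1) : M := v 0 0 *: x.

Lemma scale_map_is_linear M (x : M) : linear (scale_map x).
Proof. by move=> a u v; rewrite /scale_map !mxE scalerDl scalerA. Qed.

HB.instance Definition _ M (x : M) :=
  GRing.isLinear.Build R 'rV[R]_1 M _ (scale_map x) (scale_map_is_linear x).

Lemma scale_map1 M (x : M) : scale_map x (const_mx 1) = x.
Proof. by rewrite /scale_map mxE scale1r. Qed.

End FreeModules.

(** * Submodules, spans and quotients *)

Section Span.
Variables (R : pzRingType) (M N : lmodType R).
Implicit Types S A B : M -> Prop.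

Lemma submoduleD S x y : submodule S -> S x -> S y -> S (x + y).
Proof. by case=> _ [SD _]; apply: SD. Qed.

Lemma submoduleZ S a x : submodule S -> S x -> S (a *: x).
Proof. by case=> _ [_ SZ]; apply: SZ. Qed.

Lemma submoduleB S x y : submodule S -> S x -> S y -> S (x - y).
Proof.
move=> S_sub Sx Sy; rewrite -scaleN1r.
by apply: (submoduleD S_sub Sx); apply: submoduleZ.
Qed.

Lemma submodule_comb S n (w : 'I_n -> M) (v : 'rV[R]_n) :
  submodule S -> (forall j, S (w j)) -> S (comb w v).
Proof.
move=> S_sub Sw; apply: big_ind => [|x y|j _]; first by case: S_sub.
  exact: submoduleD.
by apply: submoduleZ.
Qed.

Lemma submodule_eq (u v : {linear M -> N}) : submodule (fun x => u x = v x).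
Proof.
split; first by rewrite !linear0.
by split=> [x y ux uy|a x ux]; rewrite ?linearD ?linearZ ?ux ?uy.
Qed.

Lemma submodule_image (h : {linear N -> M}) : submodule (fun y => exists x, h x = y).
Proof.
split; first by exists 0; rewrite linear0.
split=> [? ? [x <-] [y <-]|a ? [x <-]]; first by exists (x + y); rewrite linearD.
by exists (a *: x); rewrite linearZ.
Qed.

Definition span A (y : M) : Prop :=
  forall S, submodule S -> (forall x, A x -> S x) -> S y.

Lemma span_submodule A : submodule (span A).
Proof.
split; first by move=> S [].
split=> [x y Ax Ay|a x Ax] S S_sub AS.
  by apply: (submoduleD S_sub); [apply: Ax | apply: Ay].
by apply: (submoduleZ _ S_sub); apply: Ax.
Qed.

Lemma mem_span A x : A x -> span A x.
Proof. by move=> Ax S _; apply. Qed.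

Lemma span_mono A B y : (forall x, A x -> B x) -> span A y -> span B y.
Proof. by move=> AB Ay S S_sub BS; apply: Ay => // x /AB /BS. Qed.

End Span.

Section QuotientModule.
Local Open Scope quotient_scope.
Import Quotient.
Variables (R : pzRingType) (M : lmodType R) (N : M -> Prop).
Hypothesis N_submodule : submodule N.

Definition submodule_pred : {pred M} := fun x => `[< N x >].

Lemma submodule_predP x : reflect (N x) (x \in submodule_pred).
Proof. exact: asboolP. Qed.

Lemma submodule_pred_zmod_closed : zmod_closed submodule_pred.
Proof.
split=> [|x y /submodule_predP Nx /submodule_predP Ny]; apply/submodule_predP.
  by case: N_submodule.
exact: submoduleB.
Qed.

HB.instance Definition _ :=
  GRing.isZmodClosed.Build M submodule_pred submodule_pred_zmod_closed.

Definition quotmod := quot submodule_pred.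
HB.instance Definition _ := GRing.Zmodule.on quotmod.
HB.instance Definition _ := EqQuotient.on quotmod.

Definition scaleq (a : R) := lift_op1 quotmod ( *:%R a).

Lemma pi_scale a : {morph \pi_quotmod : x / a *: x >-> scaleq a x}.
Proof.
move=> x; unlock scaleq; apply/eqP; rewrite piE equivE -scalerBr.
apply/submodule_predP/(submoduleZ _ N_submodule)/submodule_predP.
by rewrite idealrBE reprK.
Qed.
Canonical pi_scale_morph a := PiMorph1 (pi_scale a).

Lemma scaleqA a b x : scaleq a (scaleq b x) = scaleq (a * b) x.
Proof. by rewrite -[x]reprK !piE scalerA. Qed.

Lemma scaleq1 : left_id 1 scaleq.
Proof. by move=> x; rewrite -[x]reprK !piE scale1r. Qed.

Lemma scaleqDr : right_distributive scaleq +%R.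
Proof. by move=> a x y; rewrite -[x]reprK -[y]reprK !piE scalerDr. Qed.

Lemma scaleqDl x : {morph scaleq^~ x : a b / a + b}.
Proof. by move=> a b; rewrite -[x]reprK !piE scalerDl. Qed.

HB.instance Definition _ :=
  GRing.Zmodule_isLmodule.Build R quotmod scaleqA scaleq1 scaleqDr scaleqDl.

Lemma pi_quotmod_linear : linear \pi_quotmod.
Proof. by move=> a x y; rewrite !piE. Qed.

HB.instance Definition _ :=
  GRing.isLinear.Build R M quotmod _ \pi_quotmod pi_quotmod_linear.

Lemma pi_quotmod_eq0 x : \pi_quotmod x = 0 <-> N x.
Proof.
rewrite -(linear0 \pi_quotmod); split=> [/eqP|Nx].
  by rewrite -idealrBE subr0 => /submodule_predP.
by apply/eqP; rewrite -idealrBE subr0; apply/submodule_predP.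
Qed.

End QuotientModule.

(** * Epimorphisms, generators and presentations *)

Section Epimorphisms.
Variable R : pzRingType.
Implicit Types X M P A B C Z : lmodType R.

(* Conversely, the projection onto the quotient by [span A] agrees with [0] on [A]. *)
Lemma spanP M (A : M -> Prop) y :
  span A y <-> forall Z (u v : {linear M -> Z}),
                 (forall x, A x -> u x = v x) -> u y = v y.
Proof.
split=> [Ay Z u v uv|equalized]; first exact: Ay (submodule_eq u v) uv.
have span_A := span_submodule A.
apply: (proj1 (pi_quotmod_eq0 span_A y)).
have := equalized _ (\pi_(quotmod span_A))%qT \0; apply=> x Ax /=.
exact: (proj2 (pi_quotmod_eq0 span_A x) (mem_span Ax)).
Qed.

Definition joint_image X M (I : Type) (P : pred I) (f : I -> {linear X -> M})
  (y : M) : Prop := exists i x, P i /\ f i x = y.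

Definition jointly_epi X M (I : Type) (P : pred I) (f : I -> {linear X -> M}) :=
  forall Z (u v : {linear M -> Z}),
    (forall i x, P i -> u (f i x) = v (f i x)) -> u =1 v.

Definition epi X M (h : {linear X -> M}) :=
  jointly_epi (fun _ : unit => true) (fun _ => h).

Lemma jointly_epiP X M I (P : pred I) (f : I -> {linear X -> M}) :
  jointly_epi P f <-> forall y, span (joint_image P f) y.
Proof.
split=> [f_epi y|f_span Z u v uv y].
  by apply/spanP => Z u v uv; apply: f_epi => i x Pi; apply: uv; exists i, x.
by apply: (proj1 (spanP _ _) (f_span y)) => _ [i [x [Pi <-]]]; apply: uv.
Qed.

Lemma epiP X M (h : {linear X -> M}) : epi h <-> forall y, exists x, h x = y.
Proof.
rewrite /epi jointly_epiP; split=> [h_span y|h_surj y].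
  by apply: (h_span y _ (submodule_image h)) => _ [_ [x [_ <-]]]; exists x.
by have [x <-] := h_surj y; apply: mem_span; exists tt, x.
Qed.

Definition finitely_generated M :=
  exists n (p : {linear 'rV[R]_n -> M}), forall y, exists v, p v = y.

(* Families with a common source suffice: [compact_fg] only uses the maps
   ['rV_1 -> M]. *)
Definition compact M :=
  forall X (I : eqType) (f : I -> {linear X -> M}),
    jointly_epi predT f -> exists s : seq I, jointly_epi (fun i => i \in s) f.

Lemma span_joint_image_finite X M (I : eqType) (f : I -> {linear X -> M}) y :
  span (joint_image predT f) y ->
  exists s : seq I, span (joint_image (fun i => i \in s) f) y.
Proof.
pose fin_span (s : seq I) := span (joint_image (fun i => i \in s) f).
have fin_span_mono (s t : seq I) z : {subset s <= t} -> fin_span s z -> fin_span t z.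
  move=> st; apply: span_mono => _ [i [x [si <-]]]; exists i, x; split=> //.
  exact: st.
move=> y_span; apply: (y_span (fun y => exists s, fin_span s y)); last first.
  move=> _ [i [x [_ <-]]]; exists [:: i]; apply: mem_span; exists i, x.
  by rewrite mem_seq1.
split; first by exists [::]; case: (span_submodule (joint_image (fun i => i \in [::]) f)).
split=> [y1 y2 [s1 span1] [s2 span2]|a z [s span_z]].
  exists (s1 ++ s2); apply: (submoduleD (span_submodule _)).
    by apply: fin_span_mono span1 => i; rewrite mem_cat => ->.
  by apply: fin_span_mono span2 => i; rewrite mem_cat => ->; rewrite orbT.
by exists s; apply: (submoduleZ _ (span_submodule _)).
Qed.

Lemma fg_compact M : finitely_generated M -> compact M.
Proof.
move=> [n [p p_surj]] X I f /jointly_epiP f_span.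
have [s s_span] := fin_all_exists (fun j : 'I_n =>
  span_joint_image_finite (f_span (p (delta_mx 0 j)))).
exists (flatten [seq s j | j <- enum 'I_n]); apply/jointly_epiP => y.
have [v <-] := p_surj y; rewrite linear_rowE.
apply: submodule_comb => [|j]; first exact: span_submodule.
apply: span_mono (s_span j) => _ [i [x [sji <-]]]; exists i, x; split=> //.
by apply/flattenP; exists (s j) => //; apply: map_f; rewrite mem_enum.
Qed.

Lemma compact_fg M : compact M -> finitely_generated M.
Proof.
move=> M_compact.
have [s s_epi] : exists s : seq M,
    jointly_epi (fun x => x \in s) (fun x => scale_map x : {linear 'rV[R]_1 -> M}).
  apply: M_compact; apply/jointly_epiP => y; apply: mem_span.
  by exists y, (const_mx 1); split=> //; apply: scale_map1.
exists (size s), (comb (fun j => s`_j)) => y.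
apply: (proj1 (jointly_epiP _ _) s_epi y _ (submodule_image _)).
move=> _ [x [v [sx <-]]]; have lt_xs : (index x s < size s)%N by rewrite index_mem.
exists (v 0 0 *: delta_mx 0 (Ordinal lt_xs)).
by rewrite linearZ /= comb_delta nth_index.
Qed.

Lemma fg_rV n : finitely_generated 'rV[R]_n.
Proof. by exists n, idfun => v; exists v. Qed.

Lemma simple_moduleP M : simple_module M <->
  (exists x : M, x <> 0) /\
  forall X (g : {linear X -> M}), (forall x, g x = 0) \/ epi g.
Proof.
split=> -[M_nz M_simple]; split=> //.
  move=> X g; case: (M_simple _ (submodule_image g)) => [g0|g_surj].
    by left=> x; apply: g0; exists x.
  by right; apply/epiP.
move=> S S_sub; case: (pselect (exists2 x, S x & x <> 0)) => [[x Sx x_nz]|S0].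
  right=> y; case: (M_simple _ (scale_map x)) => [/(_ (const_mx 1))|/epiP/(_ y) [v <-]].
    by rewrite /= scale_map1.
  exact: submoduleZ.
by left=> x Sx; apply: contrapT => x_nz; apply: S0; exists x.
Qed.

Definition projective P :=
  forall A B (h : {linear A -> B}) (a : {linear P -> B}),
    epi h -> exists b : {linear P -> A}, forall x, h (b x) = a x.

Lemma projective_rV n : projective 'rV[R]_n.
Proof.
move=> A B h a /epiP h_surj.
have [w hw] := fin_all_exists (fun j : 'I_n => h_surj (a (delta_mx 0 j))).
exists (comb w) => v; rewrite [RHS]linear_rowE /comb linear_sum.
by apply: eq_bigr => j _; rewrite linearZ hw.
Qed.

Definition cokernel A B C (g : {linear A -> B}) (f : {linear B -> C}) :=
  [/\ forall x, f (g x) = 0, epi f &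
      forall Z (u : {linear B -> Z}), (forall x, u (g x) = 0) ->
        exists w : {linear C -> Z}, forall y, w (f y) = u y].

Lemma cokernelP A B C (g : {linear A -> B}) (f : {linear B -> C}) :
  cokernel g f <->
  (forall z, exists y, f y = z) /\ (forall y, f y = 0 <-> exists x, y = g x).
Proof.
split=> [[fg0 /epiP f_surj f_univ]|[f_surj f_exact]].
  split=> // y; split=> [fy0|[x ->] //].
  have img_sub := submodule_image g.
  have [w wf] := f_univ _ (\pi_(quotmod img_sub))%qT
    (fun x => proj2 (pi_quotmod_eq0 img_sub _) (ex_intro _ x erefl)).
  have : (\pi_(quotmod img_sub))%qT y = 0 by rewrite -wf fy0 linear0.
  by move/pi_quotmod_eq0 => [x <-]; exists x.
split=> [x|//|Z u ug0]; first by apply/f_exact; exists x.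
  exact/epiP.
have [sec secK] := choice f_surj.
have u_ker y : f y = 0 -> u y = 0 by move/f_exact => [x ->].
have sec_linear : linear (u \o sec).
  move=> a z z'; rewrite /= -linearZ -linearD; apply/eqP; rewrite -subr_eq0 -linearB.
  by apply/eqP/u_ker; rewrite linearB linearD linearZ !secK subrr.
exists (linear_map sec_linear) => y /=; apply/eqP; rewrite -subr_eq0 -linearB.
by apply/eqP/u_ker; rewrite linearB secK subrr.
Qed.

Lemma finitely_presented_of_span_kernel n C (f : {linear 'rV[R]_n -> C})
    (rels : seq 'rV[R]_n) :
  (forall z, exists v, f v = z) ->
  (forall v, f v = 0 <-> span (fun r => r \in rels) v) ->
  finitely_presented C.
Proof.
move=> f_surj f_ker; exists n, (size rels), f, (comb (fun j => rels`_j)).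
split=> // v; rewrite f_ker; split=> [v_span|[w ->]].
  have [w <-] : exists w, comb (fun j : 'I_(size rels) => rels`_j) w = v.
    apply: (v_span _ (submodule_image _)) => r rels_r.
    have lt_r : (index r rels < size rels)%N by rewrite index_mem.
    by exists (delta_mx 0 (Ordinal lt_r)); rewrite /= comb_delta nth_index.
  by exists w.
apply: submodule_comb => [|j]; first exact: span_submodule.
by apply: mem_span; apply: mem_nth.
Qed.

(* Presenting [B] by [pB], the kernel of [f \o pB] is spanned by the images
   under a section [s] of [pB] of the generators of [A], together with the
   defects [e_i - s (pB e_i)] of the basis vectors. *)
Lemma finitely_presented_of_exact A B C (g : {linear A -> B}) (f : {linear B -> C}) :
  finitely_generated A -> finitely_generated B -> projective B ->
  (forall z, exists y, f y = z) -> (forall y, f y = 0 <-> exists x, y = g x) ->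
  finitely_presented C.
Proof.
move=> [k [pA pA_surj]] [n [pB pB_surj]] B_proj f_surj f_exact.
have [s pB_s] := B_proj _ _ pB idfun (proj2 (epiP pB) pB_surj).
pose rels := [seq s (g (pA (delta_mx 0 j))) | j <- enum 'I_k] ++
             [seq delta_mx 0 i - s (pB (delta_mx 0 i)) | i <- enum 'I_n].
have rels_span m (q : {linear 'rV[R]_m -> 'rV_n}) w :
  (forall j, q (delta_mx 0 j) \in rels) -> span (fun r => r \in rels) (q w).
  move=> q_rels; rewrite linear_rowE; apply: submodule_comb => [|j].
    exact: span_submodule.
  by apply: mem_span; apply: q_rels.
apply: (@finitely_presented_of_span_kernel _ _ (f \o pB) rels).
  move=> z; have [y <-] := f_surj z; have [v <-] := pB_surj y; by exists v.
move=> v; split=> /= [fv0|v_span]; last first.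
  apply: (v_span _ (submodule_eq (f \o pB) \0)) => r.
  rewrite mem_cat => /orP[] /mapP[j _ ->] /=.
    by rewrite pB_s; apply/f_exact; exists (pA (delta_mx 0 j)).
  by rewrite linearB /= pB_s subrr linear0.
have [x gx] := (f_exact _).1 fv0; have [w pAw] := pA_surj x.
have -> : v = (s \o g \o pA) w + (idfun \- (s \o pB)) v.
  by rewrite /= pAw -gx addrC subrK.
apply: (submoduleD (span_submodule _)).
  apply: rels_span => j; rewrite mem_cat; apply/orP; left.
  by apply: (map_f (fun j => s (g (pA (delta_mx 0 j))))); rewrite mem_enum.
apply: rels_span => i; rewrite mem_cat; apply/orP; right.
by apply: (map_f (fun i => delta_mx 0 i - s (pB (delta_mx 0 i)))); rewrite mem_enum.
Qed.

End Epimorphisms.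

Section Isomorphisms.
Variable R : pzRingType.
Implicit Types M N P : lmodType R.

Lemma mod_iso_sym M N : mod_iso M N -> mod_iso N M.
Proof. by case=> f /bij_linear_inv [g [fK gK]]; exists g; exists f. Qed.

Lemma mod_iso_trans M N P : mod_iso M N -> mod_iso N P -> mod_iso M P.
Proof. by move=> [f f_bij] [g g_bij]; exists (g \o f); apply: bij_comp. Qed.

Lemma has_card_iso M N n : mod_iso M N -> has_card M n -> has_card N n.
Proof.
move=> [f [g fK gK]] [s [s_uniq [s_size s_all]]]; exists (map f s).
split; first by rewrite map_inj_uniq //; apply: can_inj fK.
by split=> [|y]; [rewrite size_map | rewrite -[y]gK map_f].
Qed.

Lemma finite_has_card M : finite_module M -> exists n, has_card M n.
Proof.
case=> s s_all; exists (size (undup s)), (undup s).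
by split; [apply: undup_uniq | split=> // x; rewrite mem_undup].
Qed.

Lemma finitely_presented_iso M N :
  mod_iso M N -> finitely_presented M -> finitely_presented N.
Proof.
move=> [phi [psi phiK psiK]] [n [m [f [g [f_surj f_exact]]]]].
exists n, m, (phi \o f), g; split=> [y|x].
  by have [x fx] := f_surj (psi y); exists x; rewrite /= fx psiK.
rewrite -f_exact /=; split=> [phif0|->]; last exact: linear0.
by apply: (can_inj phiK); rewrite phif0 linear0.
Qed.

End Isomorphisms.

Section Functors.
Variables (R S : pzRingType) (F : mod_functor R S).
Implicit Types M N P : lmodType R.

Lemma fmap_idE M (y : fobj F M) : fmap F (idfun : {linear M -> M}) y = y.
Proof. exact: fmap_id. Qed.

Lemma fmap_compE M N P (f : {linear M -> N}) (g : {linear N -> P}) y :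
  fmap F (g \o f) y = fmap F g (fmap F f y).
Proof. exact: fmap_comp. Qed.

Lemma fmap_ext M N (f g : {linear M -> N}) : f =1 g -> fmap F f =1 fmap F g.
Proof.
move=> fg y; rewrite (@fmap_comp _ _ F _ _ _ g idfun f fg y) /=.
exact: fmap_idE.
Qed.

Lemma fmap_iso M N : mod_iso M N -> mod_iso (fobj F M) (fobj F N).
Proof.
case=> f /bij_linear_inv [g [fK gK]]; exists (fmap F f); exists (fmap F g) => y.
  by rewrite -fmap_compE (fmap_ext (g := idfun)) ?fmap_idE // => x /=; rewrite fK.
by rewrite -fmap_compE (fmap_ext (g := idfun)) ?fmap_idE // => x /=; rewrite gK.
Qed.

Definition faithful := forall M N (f g : {linear M -> N}),
  fmap F f =1 fmap F g -> f =1 g.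

Definition full := forall M N (h : {linear fobj F M -> fobj F N}),
  exists f : {linear M -> N}, fmap F f =1 h.

Definition ess_surj := forall N : lmodType S, exists M, mod_iso N (fobj F M).

End Functors.

Section NaturalIsomorphism.
Variables (R S : pzRingType) (F : mod_functor R S) (G : mod_functor S R).
Hypothesis unit_iso : nat_iso_id F G.

Lemma nat_iso_mod_iso M : mod_iso M (fobj G (fobj F M)).
Proof. by case: unit_iso => eta [eta_bij _]; exists (eta M). Qed.

Lemma nat_iso_faithful : faithful F.
Proof.
case: unit_iso => eta [eta_bij eta_nat] M N f g Ffg x.
apply: (bij_inj (eta_bij N)).
have := eta_nat _ _ f x; have := eta_nat _ _ g x; rewrite /= => <- <-.
exact: fmap_ext.
Qed.

Lemma nat_iso_full : faithful G -> full F.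
Proof.
case: unit_iso => eta [eta_bij eta_nat] G_faithful M N h.
have [etaM' [_ etaMK']] := bij_linear_inv (eta_bij M).
have [etaN' [_ etaNK']] := bij_linear_inv (eta_bij N).
exists (etaN' \o fmap G h \o eta M); apply: G_faithful => y.
rewrite -[y]etaMK'; have := eta_nat _ _ (etaN' \o fmap G h \o eta M) (etaM' y).
by rewrite /= => ->; rewrite etaNK'.
Qed.

End NaturalIsomorphism.

Lemma equivalence_fully_faithful (R S : pzRingType) (F : mod_functor R S)
    (G : mod_functor S R) :
  nat_iso_id F G -> nat_iso_id G F -> [/\ faithful F, full F & ess_surj F].
Proof.
move=> unitF unitG; split; first exact: nat_iso_faithful unitF.
  exact: nat_iso_full unitF (nat_iso_faithful unitG).
by move=> N; exists (fobj G N); apply: nat_iso_mod_iso.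
Qed.

Lemma enum_of_injective (A : eqType) (T : finType) (code : A -> T) :
  injective code -> exists l : seq A, [/\ uniq l, (size l <= #|T|)%N & forall a, a \in l].
Proof.
move=> code_inj.
pose decode (t : T) : option A :=
  if pselect (exists a, code a = t) is left ex then Some (projT1 (cid ex)) else None.
have codeK : pcancel code decode.
  move=> a; rewrite /decode; case: pselect => [ex|]; last by case; exists a.
  by case: (cid ex) => a' /= /code_inj ->.
have decodeK : ocancel decode code.
  by move=> t; rewrite /decode; case: pselect => //= ex; case: (cid ex).
exists (pmap decode (enum T)); split.
- by apply: (pmap_uniq decodeK); apply: enum_uniq.
- by rewrite size_pmap (leq_trans (count_size _ _)) // cardE.
- by move=> a; rewrite (can2_mem_pmap decodeK codeK) mem_enum.
Qed.

Section FaithfulFunctor.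
Variables (R S : pzRingType) (F : mod_functor R S).
Hypothesis F_faithful : faithful F.
Implicit Types M N X : lmodType R.

Lemma faithful_zero M N (f : {linear M -> N}) :
  (forall y, fmap F f y = 0) -> forall x, f x = 0.
Proof.
move=> Ff0 x; have f_0 : f =1 f \o (\0 : {linear M -> M}).
  by apply: F_faithful => y; rewrite fmap_compE !Ff0.
by rewrite f_0 /= linear0.
Qed.

Lemma faithful_jointly_epi X M (I : Type) (P : pred I) (f : I -> {linear X -> M}) :
  jointly_epi P (fun i => fmap F (f i)) -> jointly_epi P f.
Proof.
move=> Ff_epi Z u v uv; apply: F_faithful; apply: Ff_epi => i y Pi.
by rewrite -!fmap_compE; apply: fmap_ext => x; apply: uv.
Qed.

Variables (k : nat) (p : {linear 'rV[S]_k -> fobj F 'rV[R]_1}).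
Hypothesis p_surj : forall y, exists v, p v = y.

(* [x] is determined by [fmap F (scale_map x)], hence by the values of that
   map on the [k] generators [p e_j] of [fobj F 'rV_1]. *)
Lemma faithful_card_bound M n :
  has_card (fobj F M) n -> exists2 c, (c <= n ^ k)%N & has_card M c.
Proof.
move=> [s [s_uniq [s_size s_all]]].
pose code (x : M) : {ffun 'I_k -> seq_sub s} :=
  [ffun j => SeqSub (s_all (fmap F (scale_map x) (p (delta_mx 0 j))))].
have code_inj : injective code.
  move=> x x' /ffunP code_xx'.
  have : (scale_map x : {linear 'rV_1 -> M}) =1 scale_map x'.
    apply: F_faithful; apply: (surj_linear_eq p_surj) => j.
    by have := congr1 val (code_xx' j); rewrite !ffunE.
  by move=> /(_ (const_mx 1)); rewrite /= !scale_map1.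
have [l [l_uniq l_size l_all]] := enum_of_injective code_inj.
exists (size l); last by exists l.
by rewrite (leq_trans l_size) // card_ffun card_ord card_seq_sub // s_size.
Qed.

End FaithfulFunctor.

(** * Equivalences preserve the module-theoretic notions *)

Section FullyFaithful.
Variables (R S : pzRingType) (F : mod_functor R S).
Hypotheses (F_faithful : faithful F) (F_full : full F) (F_ess_surj : ess_surj F).
Implicit Types M N X P A B C : lmodType R.

Lemma ess_surj_iso (N : lmodType S) :
  exists M (phi : {linear N -> fobj F M}) (psi : {linear fobj F M -> N}),
    cancel phi psi /\ cancel psi phi.
Proof.
have [M [phi /bij_linear_inv [psi [phiK psiK]]]] := F_ess_surj N.
by exists M, phi, psi.
Qed.

Lemma fmap_zero_module M : (forall x : M, x = 0) -> forall y : fobj F M, y = 0.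
Proof.
move=> M0 y.
have [a Fa] := F_full (idfun : {linear fobj F M -> fobj F M}).
have [b Fb] := F_full (\0 : {linear fobj F M -> fobj F M}).
have ab : a =1 b by move=> x; rewrite (M0 (a x)) (M0 (b x)).
by have := Fa y; rewrite (fmap_ext ab) Fb.
Qed.

Lemma fmap_zero M N (f : {linear M -> N}) :
  (forall x, f x = 0) -> forall y, fmap F f y = 0.
Proof.
move=> f0 y.
have f_thru0 : f =1 (\0 : {linear 'rV[R]_0 -> N}) \o (\0 : {linear M -> 'rV[R]_0}).
  by move=> x; rewrite f0.
rewrite (fmap_ext f_thru0) fmap_compE.
by rewrite (@fmap_zero_module 'rV[R]_0 _ (fmap F _ y)) ?linear0 // => v; rewrite thinmx0.
Qed.

Lemma fmap_jointly_epi X M (I : Type) (P : pred I) (f : I -> {linear X -> M}) :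
  jointly_epi P f -> jointly_epi P (fun i => fmap F (f i)).
Proof.
move=> f_epi Z u v uv y.
have [Z0 [phi [psi [phiK psiK]]]] := ess_surj_iso Z.
have [a Fa] := F_full (phi \o u); have [b Fb] := F_full (phi \o v).
have ab : a =1 b.
  apply: f_epi => i x Pi.
  have : a \o f i =1 b \o f i.
    by apply: F_faithful => z; rewrite !fmap_compE Fa Fb /= uv.
  exact.
apply: (can_inj phiK); have := Fa y; have := Fb y; rewrite /= => <- <-.
exact: fmap_ext.
Qed.

Lemma fmap_simple M : simple_module M -> simple_module (fobj F M).
Proof.
move=> /simple_moduleP [[x x_nz] M_simple]; apply/simple_moduleP; split.
  apply: contrapT => FM0; apply: x_nz.
  have : (idfun : {linear M -> M}) =1 \0.
    apply: F_faithful => y.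
    have -> : y = 0 by apply: contrapT => y_nz; apply: FM0; exists y.
    by rewrite !linear0.
  exact.
move=> X g; have [X0 [phi [psi [phiK psiK]]]] := ess_surj_iso X.
have [g0 Fg0] := F_full (g \o psi).
case: (M_simple _ g0) => [g00|g0_epi]; [left=> y | right].
  by rewrite -[y]phiK; have := Fg0 (phi y); rewrite /= => <-; apply: fmap_zero.
move=> Z u v uv; apply: (fmap_jointly_epi g0_epi) => _ y _.
by have := Fg0 y; rewrite /= => ->; apply: uv.
Qed.

Lemma fmap_compact M : compact M -> compact (fobj F M).
Proof.
move=> M_compact X I f f_epi.
have [X0 [phi [psi [phiK psiK]]]] := ess_surj_iso X.
have [g Fg] := choice (fun i => F_full (f i \o psi)).
have g_epi : jointly_epi predT g.
  apply: (faithful_jointly_epi F_faithful) => Z u v uv; apply: f_epi => i x _.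
  by rewrite -[x]phiK; have := Fg i (phi x); rewrite /= => <-; apply: uv.
have [s g_s] := M_compact _ _ g g_epi.
exists s => Z u v uv; apply: (fmap_jointly_epi g_s) => i y si.
by have := Fg i y; rewrite /= => ->; apply: uv.
Qed.

Lemma fmap_fg M : finitely_generated M -> finitely_generated (fobj F M).
Proof. by move=> /fg_compact /fmap_compact /compact_fg. Qed.

Lemma fmap_projective P : projective P -> projective (fobj F P).
Proof.
move=> P_proj A B h a /epiP h_surj.
have [A0 [phiA [psiA [phiAK psiAK]]]] := ess_surj_iso A.
have [B0 [phiB [psiB [phiBK psiBK]]]] := ess_surj_iso B.
have [h0 Fh0] := F_full (phiB \o h \o psiA).
have [a0 Fa0] := F_full (phiB \o a).
have h0_epi : epi h0.
  apply: (faithful_jointly_epi F_faithful); apply/(epiP (fmap F h0)) => y.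
  have [x hx] := h_surj (psiB y); exists (phiA x).
  by rewrite Fh0 /= phiAK hx psiBK.
have [b0 h0b0] := P_proj _ _ h0 a0 h0_epi.
exists (psiA \o fmap F b0) => x /=; rewrite -[LHS]phiBK.
have := Fh0 (fmap F b0 x); rewrite /= => <-.
by rewrite -fmap_compE (fmap_ext (f := h0 \o b0) h0b0) Fa0 /= phiBK.
Qed.

Lemma fmap_cokernel A B C (g : {linear A -> B}) (f : {linear B -> C}) :
  cokernel g f -> cokernel (fmap F g) (fmap F f).
Proof.
case=> fg0 f_epi f_univ; split=> [x||]; first by rewrite -fmap_compE; apply: fmap_zero.
  exact: fmap_jointly_epi.
move=> Z u ug0; have [Z0 [phi [psi [phiK psiK]]]] := ess_surj_iso Z.
have [u0 Fu0] := F_full (phi \o u).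
have [w0 w0f] : exists w0 : {linear C -> Z0}, forall y, w0 (f y) = u0 y.
  apply: f_univ; apply: (faithful_zero F_faithful (f := u0 \o g)) => y.
  by rewrite fmap_compE Fu0 /= ug0 linear0.
exists (psi \o fmap F w0) => y /=.
by rewrite -fmap_compE (fmap_ext (f := w0 \o f) w0f) Fu0 /= phiK.
Qed.

Lemma fmap_finitely_presented M :
  finitely_presented M -> finitely_presented (fobj F M).
Proof.
move=> [n [m [f [g [f_surj f_exact]]]]].
have /fmap_cokernel /cokernelP [Ff_surj Ff_exact] : cokernel g f by apply/cokernelP.
apply: (finitely_presented_of_exact _ _ _ Ff_surj Ff_exact).
- exact/fmap_fg/fg_rV.
- exact/fmap_fg/fg_rV.
- exact/fmap_projective/projective_rV.
Qed.

End FullyFaithful.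

Lemma simple_classes_upto (R : pzRingType) :
  (forall n, (0 < n)%N -> exists k (Ms : nat -> lmodType R),
     forall M, simple_module M -> has_card M n ->
       exists i, (i < k)%N /\ mod_iso M (Ms i)) ->
  forall N, exists k (Ms : nat -> lmodType R),
    forall M c, simple_module M -> has_card M c -> (c <= N)%N ->
      exists i, (i < k)%N /\ mod_iso M (Ms i).
Proof.
move=> classes; elim=> [|N [k1 [Ms1 classes1]]].
  exists 0%N, (fun _ => 'rV[R]_0) => M c [[x _] _] [s [_ [s_size s_all]]].
  by rewrite leqn0 -s_size => /nilP s0; move: (s_all x); rewrite s0.
have [k2 [Ms2 classes2]] := classes N.+1 isT.
exists (k1 + k2)%N, (fun i => if (i < k1)%N then Ms1 i else Ms2 (i - k1)%N).
move=> M c M_simple M_card; rewrite leq_eqVlt => /orP[/eqP c_eq|c_lt].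
  rewrite c_eq in M_card; have [i [lt_ik2 iso_i]] := classes2 _ M_simple M_card.
  exists (k1 + i)%N; split; first by rewrite ltn_add2l.
  by rewrite ltnNge leq_addr /= addKn.
have [i [lt_ik1 iso_i]] := classes1 _ _ M_simple M_card c_lt.
by exists i; rewrite lt_ik1 (leq_trans lt_ik1) ?leq_addr.
Qed.

Theorem proposition2p1 (R R' : pzRingType) :
  left_arithmetical R -> morita_equivalent R R' -> left_arithmetical R'.
Proof.
move=> [simple_finite [simple_fp simple_classes]] [F [G [unitF unitG]]].
have [F_faithful F_full F_ess_surj] := equivalence_fully_faithful unitF unitG.
have [G_faithful G_full G_ess_surj] := equivalence_fully_faithful unitG unitF.
have iso_FG := nat_iso_mod_iso unitG.
have G_simple N : simple_module N -> simple_module (fobj G N).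
  exact: fmap_simple G_faithful G_full G_ess_surj N.
have [kF [pF pF_surj]] := fmap_fg F_faithful F_full F_ess_surj (fg_rV R 1).
have [kG [pG pG_surj]] := fmap_fg G_faithful G_full G_ess_surj (fg_rV R' 1).
split; [|split].
- move=> N /G_simple /simple_finite /finite_has_card [n GN_card].
  have [c _ [s [_ [_ s_all]]]] := faithful_card_bound G_faithful pG_surj GN_card.
  by exists s.
- move=> N /G_simple /simple_fp /(fmap_finitely_presented F_faithful F_full F_ess_surj).
  exact/finitely_presented_iso/mod_iso_sym/iso_FG.
- move=> n _; have [k [Ms Ms_classes]] := simple_classes_upto simple_classes (n ^ kF).
  exists k, (fun i => fobj F (Ms i)) => N N_simple N_card.
  have [c c_le GN_card] :=
    faithful_card_bound F_faithful pF_surj (has_card_iso (iso_FG N) N_card).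
  have [i [lt_ik iso_i]] := Ms_classes _ _ (G_simple _ N_simple) GN_card c_le.
  by exists i; split=> //; apply: mod_iso_trans (iso_FG N) (fmap_iso F iso_i).
Qed.
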